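(* Let $\Gamma=((V,E),m)$ be an EAFC system with $V$ finite, $G=G_\Gamma$, and $Y\subseteq G$. Then $N_G(Y):=\{g\in G \mid gYg^{-1}=Y\}$ is contained in $N_G(P(Y))$.
   Context: An Artin–Tits system $\Gamma=((V,E),m)$ consists of a simplicial graph $(V,E)$ and a labelling $m\colon E\to\{2,3,\dots\}$; $G_\Gamma=\langle V \mid \mathrm{prod}(u,v,m(\{u,v\}))=\mathrm{prod}(v,u,m(\{u,v\}))\ \forall \{u,v\}\in E\rangle$, where $\mathrm{prod}(u,v,n)$ is the prefix of length $n$ of $uvuv\cdots$. An EAFC system has all labels even and among any three pairwise adjacent vertices at least two of the three edges have label $2$. For $S\subseteq V$, $G_S=\langle S\rangle$; a parabolic subgroup is a subgroup $gG_Sg^{-1}$ with $g\in G_\Gamma$, $S\subseteq V$. $P(Y)$ is the intersection of all parabolic subgroups of $G_\Gamma$ containing $Y$. *)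

From mathcomp Require Import all_boot.
From Stdlib Require Import Relation_Operators.
Set Implicit Arguments. Unset Strict Implicit. Unset Printing Implicit Defensive.

(* An Artin-Tits system on a finite vertex set V: a simple graph given by a
   symmetric irreflexive relation [adj], and labels [m u v] on edges. *)
Definition artin_tits_system (V : finType) (adj : rel V) (m : V -> V -> nat) :=
  [/\ forall u, ~~ adj u u,
      forall u v, adj u v -> adj v u,
      forall u v, adj u v -> m u v = m v u
    & forall u v, adj u v -> 2 <= m u v].

Definition EAFC (V : finType) (adj : rel V) (m : V -> V -> nat) :=
  (forall u v, adj u v -> ~~ odd (m u v)) /\
  (forall u v w, adj u v -> adj v w -> adj u w ->
     [|| (m u v == 2) && (m v w == 2),
         (m u v == 2) && (m u w == 2) |
         (m v w == 2) && (m u w == 2)]).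

(* Words in the generators and their inverses: (x, false) = x, (x, true) = x^-1. *)
Definition word (V : Type) := seq (V * bool).

Definition winv (V : Type) (w : word V) : word V :=
  rev (map (fun p => (p.1, ~~ p.2)) w).

Definition altprod (V : Type) (u v : V) (n : nat) : word V :=
  mkseq (fun i => if odd i then (v, false) else (u, false)) n.

Inductive artin_step (V : finType) (adj : rel V) (m : V -> V -> nat)
  : word V -> word V -> Prop :=
| st_free (a b : word V) (x : V) (s : bool) :
    artin_step adj m (a ++ (x, s) :: (x, ~~ s) :: b) (a ++ b)
| st_rel (a b : word V) (u v : V) :
    adj u v ->
    artin_step adj m (a ++ altprod u v (m u v) ++ b) (a ++ altprod v u (m u v) ++ b).

(* Two words represent the same element of G_Gamma. *)
Definition artin_eq (V : finType) (adj : rel V) (m : V -> V -> nat) :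
  word V -> word V -> Prop := clos_refl_sym_trans _ (artin_step adj m).

Definition wconj (V : Type) (g y : word V) : word V := g ++ y ++ winv g.

(* Subsets of G are given by predicates on words (a word lies in the subset
   as an element of G iff it is artin_eq to a word satisfying the predicate).
   [normalizes g Y] : g Y g^-1 = Y as subsets of G. *)
Definition normalizes (V : finType) (adj : rel V) (m : V -> V -> nat)
  (g : word V) (Y : word V -> Prop) : Prop :=
  (forall y, Y y -> exists y', Y y' /\ artin_eq adj m (wconj g y) y') /\
  (forall y, Y y -> exists y', Y y' /\ artin_eq adj m y (wconj g y')).

Definition in_parabolic (V : finType) (adj : rel V) (m : V -> V -> nat)
  (g : word V) (S : {set V}) (h : word V) : Prop :=
  exists w : word V, all (fun p => p.1 \in S) w /\ artin_eq adj m h (wconj g w).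

(* P(Y): intersection of all parabolic subgroups containing Y. *)
Definition parabolic_closure (V : finType) (adj : rel V) (m : V -> V -> nat)
  (Y : word V -> Prop) : word V -> Prop :=
  fun h => forall (g : word V) (S : {set V}),
    (forall y, Y y -> in_parabolic adj m g S y) -> in_parabolic adj m g S h.

From mathcomp Require Import all_boot.
From Stdlib Require Import Relation_Operators.
Set Implicit Arguments. Unset Strict Implicit.

(* The argument is that conjugation by c maps parabolic subgroups to
   parabolic subgroups: c (g' G_S g'^-1) c^-1 = (c g') G_S (c g')^-1.
   Hence if c Y c^-1 is contained in Z, every parabolic subgroup containing
   Z pulls back under c to one containing Y, which therefore contains P(Y);
   so c P(Y) c^-1 is contained in P(Z) (lemma [closure_conj]).  Applying this
   with c = g and with c = g^-1 (both mapping Y into Y when g normalizes Y)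
   gives the two inclusions g P(Y) g^-1 = P(Y). *)

Section WordCalculus.
Variables (V : finType) (adj : rel V) (m : V -> V -> nat).
Local Notation AE := (artin_eq adj m).

Lemma AE_refl (x : word V) : AE x x. Proof. exact: rst_refl. Qed.
Lemma AE_sym (x y : word V) : AE x y -> AE y x. Proof. exact: rst_sym. Qed.
Lemma AE_trans (x y z : word V) : AE x y -> AE y z -> AE x z.
Proof. exact: rst_trans. Qed.

Lemma step_ctx (c d a b : word V) :
  artin_step adj m a b -> artin_step adj m (c ++ a ++ d) (c ++ b ++ d).
Proof.
case=> [a' b' x s | a' b' u v huv].
- have -> : c ++ (a' ++ [:: (x, s), (x, ~~ s) & b']) ++ d
            = (c ++ a') ++ [:: (x, s), (x, ~~ s) & b' ++ d] by rewrite !catA -!catA.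
  have -> : c ++ (a' ++ b') ++ d = (c ++ a') ++ (b' ++ d) by rewrite !catA.
  exact: st_free.
- rewrite [c ++ (a' ++ _) ++ d]catA -!catA [c ++ a' ++ _]catA [c ++ a' ++ altprod v u _ ++ _]catA.
  exact: st_rel.
Qed.

Lemma AE_ctx (c d a b : word V) : AE a b -> AE (c ++ a ++ d) (c ++ b ++ d).
Proof.
elim=> [x y s | x | x y _ IH | x y z _ IH1 _ IH2].
- by apply: rst_step; exact: step_ctx.
- exact: AE_refl.
- exact: AE_sym.
- exact: AE_trans IH2.
Qed.

Lemma winv_cons (x : V) (s : bool) (a : word V) :
  winv ((x, s) :: a) = winv a ++ [:: (x, ~~ s)].
Proof. by rewrite /winv /= rev_cons cats1. Qed.

Lemma winv_cat (a b : word V) : winv (a ++ b) = winv b ++ winv a.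
Proof. by rewrite /winv map_cat rev_cat. Qed.

Lemma winvK (a : word V) : winv (winv a) = a.
Proof.
rewrite /winv map_rev revK -map_comp -[RHS]map_id.
by apply: eq_map => -[x s] /=; rewrite negbK.
Qed.

Lemma mulwV (a : word V) : AE (a ++ winv a) [::].
Proof.
elim: a => [|[x s] a IH] /=; first exact: AE_refl.
rewrite winv_cons catA.
apply: (@AE_trans _ ([:: (x, s)] ++ [::] ++ [:: (x, ~~ s)])).
- by have := AE_ctx [:: (x, s)] [:: (x, ~~ s)] IH; rewrite /= -catA.
- by apply: rst_step; exact: (@st_free _ adj m [::] [::] x s).
Qed.

Lemma wconj_cat (a b x : word V) : wconj (a ++ b) x = wconj a (wconj b x).
Proof. by rewrite /wconj winv_cat !catA. Qed.

Lemma AE_wconj (c a b : word V) : AE a b -> AE (wconj c a) (wconj c b).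
Proof. exact: AE_ctx. Qed.

Lemma wconjVK (c x : word V) : AE (wconj c (wconj (winv c) x)) x.
Proof.
rewrite -wconj_cat /wconj winv_cat winvK.
apply: (@AE_trans _ ([::] ++ x ++ (c ++ winv c))).
- by have := AE_ctx [::] (x ++ (c ++ winv c)) (mulwV c).
- by have := AE_ctx x [::] (mulwV c); rewrite /= !cats0.
Qed.

Lemma wconjKV (c x : word V) : AE (wconj (winv c) (wconj c x)) x.
Proof. by have := wconjVK (winv c) x; rewrite winvK. Qed.

Lemma wconj_moveL (c x y : word V) : AE (wconj c x) y -> AE x (wconj (winv c) y).
Proof.
move=> cxy; apply: AE_trans (AE_sym (wconjKV c x)) _.
exact: AE_wconj.
Qed.

Lemma wconj_moveR (c x y : word V) : AE x (wconj (winv c) y) -> AE (wconj c x) y.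
Proof. by move=> xy; apply: AE_trans (AE_wconj c xy) (wconjVK c y). Qed.

(* If c Y c^-1 lies in Z, then c P(Y) c^-1 lies in P(Z): a parabolic subgroup
   g' G_S g'^-1 containing Z pulls back to (c^-1 g') G_S (c^-1 g')^-1, which
   contains Y and hence P(Y). *)
Lemma closure_conj (c : word V) (Y Z : word V -> Prop) :
  (forall y, Y y -> exists z, Z z /\ AE (wconj c y) z) ->
  forall h, parabolic_closure adj m Y h -> parabolic_closure adj m Z (wconj c h).
Proof.
move=> cYZ h Ph g' S ZinS.
have YinS : forall y, Y y -> in_parabolic adj m (winv c ++ g') S y.
  move=> y /cYZ [z [/ZinS [w [Sw zw]] cyz]].
  exists w; split=> //; rewrite wconj_cat.
  exact/wconj_moveL/(AE_trans cyz zw).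
have [w [Sw hw]] := Ph _ _ YinS.
by exists w; split=> //; apply: wconj_moveR; rewrite -wconj_cat.
Qed.

End WordCalculus.

Theorem lemma2p4 (V : finType) (adj : rel V) (m : V -> V -> nat)
  (hAT : artin_tits_system adj m) (hE : EAFC adj m)
  (Y : word V -> Prop) (g : word V) :
  normalizes adj m g Y -> normalizes adj m g (parabolic_closure adj m Y).
Proof.
move=> [gYY gVYY]; split=> h Ph.
-
  exists (wconj g h); split; last exact: AE_refl.
  exact: closure_conj gYY h Ph.
- (* g^-1 Y g lies in Y, so g^-1 P(Y) g is contained in P(Y). *)
  have gVY : forall y, Y y -> exists z, Y z /\ artin_eq adj m (wconj (winv g) y) z.
    move=> y /gVYY [z [Yz yz]]; exists z; split=> //.
    by apply: wconj_moveR; rewrite winvK.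
  exists (wconj (winv g) h); split; first exact: closure_conj gVY h Ph.
  by apply: AE_sym; exact: wconjVK.
Qed.
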